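(* Let the MT pdf at time $t-1$ be a mixture over $n$-target hypotheses $q^{(n)}$, $$p_{t-1}(X,n)=\sum_{q^{(n)}}\omega^{q^{(n)}}_{t-1}\sum_\nu\prod_{i=1}^n p^{q^{(n)},i}_{t-1}(x_{\nu_i}),$$ and suppose no birth or death. Then (i) the predicted MT pdf $p_t^-(X,n)=\frac1{n!}\int p(X,n\mid X',n)p_{t-1}(X',n)dX'$ is $$p_t^-(X,n)=\sum_{q^{(n)}}\omega^{q^{(n)}}_{t-1}\sum_\nu\prod_{i}p_t^{q^{(n)},i-}(x_{\nu_i}),\qquad p_t^{q^{(n)},i-}(x)=\int p(x\mid x')p^{q^{(n)},i}_{t-1}(x')dx';$$ and (ii) given measurements $Z_t=\{z^t_1,\dots,z^t_m\}$, the Bayes-updated MT pdf $p_t(X,n\mid Z_t)=\frac{p(Z_t\mid X,n)p_t^-(X,n)}{\sum_q\frac1{q!}\int p(Z_t\mid X',q)p_t^-(X',q)dX'}$ equals $$p_t(X,n\mid Z_t)=\sum_{q^{(n)}}\sum_{\sigma^{(n)}}\omega_t^{q^{(n)}\sigma^{(n)}}\sum_\nu\prod_i p_t^{q^{(n)}\sigma^{(n)},i}\big(x_{\nu_i}\mid z^t_{\sigma^{(n)}_i}\big),$$ where $$p_t^{q^{(n)}\sigma^{(n)},i}(x\mid z)=\frac{p(z\mid x)\,p_t^{q^{(n)},i-}(x)}{\int p(z\mid x')\,p_t^{q^{(n)},i-}(x')dx'},$$ $$\omega_t^{q^{(n)}\sigma^{(n)}}=\frac{\omega^{q^{(n)}}_{t-1}\,p(\sigma^{(n)}\mid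 n)\,l_{q^{(n)}\sigma^{(n)}}}{\sum_q\sum_{r^{(q)}}\sum_{\nu^{(q)}}\omega^{r^{(q)}}_{t-1}\,p(\nu^{(q)}\mid q)\,l_{r^{(q)}\nu^{(q)}}},\qquad l_{q^{(n)}\sigma^{(n)}}=\frac{k!}{V^k}\prod_i\int p(z^t_{\sigma^{(n)}_i}\mid x)\,p_t^{q^{(n)},i-}(x)dx,$$ $k$ being the number of measurements assigned to clutter by $\sigma^{(n)}$, and the denominator summing over all cardinalities $q$, all prior $q$-target hypotheses $r^{(q)}$ and all $q$-target data associations $\nu^{(q)}$.
   Context: A multi-target (MT) pdf is a function $p(X,n)$ of a cardinality $n$ and an unordered collection $X=\{x_1,\dots,x_n\}$ of points in $\mathbb{R}^d$; $\sum_\nu$ is the sum over all permutations $\nu$ of $\{1,\dots,n\}$; the integral over $n$-element collections is $\frac{1}{n!}\int\cdot\,dx_1\cdots dx_n$. Single-target transition density $p(x\mid x')$; without birth or death the MT transition density is $p(X,n\mid X',n)=\sum_\nu\prod_{i=1}^n p(x_{\nu_i}\mid x'_i)$. Single-target likelihood $p(z\mid x)$. Given measurements $Z=\{z_1,\dots,z_m\}$, a data association hypothesis for $n$ targets is $\sigma^{(n)}=(\sigma^{(n)}_1,\dots,\sigma^{(n)}_n)$ with $\sigma^{(n)}_i\in\{z_1,\dots,z_m,\phi\}$, each measurement assigned to at most one target ($\phi$ = missed detection); the $k$ measurements not assigned to any target are clutter. Convention: $p(\phi\mid x)=1$ (so updating with $\phi$ leaves a pdf unchanged). The MT likelihood is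 $p(Z\mid X,n)=\sum_{\sigma^{(n)}}p(Z\mid\sigma^{(n)},X,n)\,p(\sigma^{(n)}\mid n)$ with $p(\sigma^{(n)}\mid n)=p_D^{m-k}(1-p_D)^{n-(m-k)}e^{-\lambda V}\frac{(\lambda V)^k}{k!}$ (detection probability $p_D$, Poisson clutter of rate $\lambda$ uniform on sensor volume $V$) and $p(Z\mid\sigma^{(n)},X,n)=\frac{k!}{V^k}\prod_{i=1}^n p(z_{\sigma^{(n)}_i}\mid x_i)$. *)

From HB Require Import structures.
From mathcomp Require Import all_boot all_order all_algebra fingroup perm.
From mathcomp Require Import all_classical all_reals all_analysis.
Set Implicit Arguments.
Unset Strict Implicit.
Unset Printing Implicit Defensive.
Import Order.TTheory GRing.Theory Num.Theory.
Local Open Scope ring_scope.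
Local Open Scope ereal_scope.

(* Single-target state space: a measurable space T with a (sigma-finite)
   reference measure mu (Lebesgue measure on R^d in the paper).
   Multi-target states with n targets are represented by n-tuples
   (x_1,...,x_n); all MT pdfs below are symmetric in the tuple. *)

Section MT.
Context {d : measure_display} {T : measurableType d} {R : realType}.
Variable mu : {measure set T -> \bar R}.

Fixpoint iterint (n : nat) : (n.-tuple T -> \bar R) -> \bar R :=
  match n return (n.-tuple T -> \bar R) -> \bar R with
  | 0 => fun F => F [tuple]
  | n'.+1 => fun F => \int[mu]_x iterint (fun t => F (cons_tuple x t))
  end.

(* integral over n-element collections: (1/n!) \int . dx_1 ... dx_n *)
Definition mt_int (n : nat) (F : n.-tuple T -> \bar R) : \bar R :=
  ((n`!)%:R^-1)%:E * iterint F.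

(* trans x x' = p(x | x') *)
Variable trans : T -> T -> R.

Definition mt_trans (n : nat) (X X' : n.-tuple T) : R :=
  (\sum_(nu : 'S_n) \prod_(i < n) trans (tnth X (nu i)) (tnth X' i))%R.

Definition mt_mix (H : nat -> finType) (w : forall n, H n -> R)
  (f : forall n, H n -> 'I_n -> T -> R) (n : nat) (X : n.-tuple T) : R :=
  (\sum_(q : H n) w n q *
     \sum_(nu : 'S_n) \prod_(i < n) f n q i (tnth X (nu i)))%R.

Definition mt_pred (H : nat -> finType) (w : forall n, H n -> R) (f : forall n, H n -> 'I_n -> T -> R) (n : nat) (X : n.-tuple T) : \bar R :=
  mt_int (fun X' => (mt_trans X X' * mt_mix w f X')%:E).

Definition st_pred (g : T -> R) (x : T) : \bar R :=
  \int[mu]_x' (trans x x' * g x')%:E.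

(* data association hypotheses for n targets and m measurements:
   sigma_i = Some j (measurement z_j) or None (phi, missed detection) *)
Definition assoc (n m : nat) := {ffun 'I_n -> option 'I_m}.

Definition valid_assoc n m (s : assoc n m) : bool :=
  [forall i, forall j, ((s i != None) && (s i == s j)) ==> (i == j)].

Definition ndet n m (s : assoc n m) : nat := #|[set i | s i != None]|.

Definition nclut n m (s : assoc n m) : nat := (m - ndet s)%N.

Definition p_assoc (pD lam V : R) n m (s : assoc n m) : R :=
  (pD ^+ ndet s * (1 - pD) ^+ (n - ndet s) * expR (- (lam * V)) *
   (lam * V) ^+ nclut s / (nclut s)`!%:R)%R.

(* p(z | x) extended with the convention p(phi | x) = 1 *)
Definition lik_opt {Mz : Type} (g : Mz -> T -> R) m (Z : 'I_m -> Mz)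
  (o : option 'I_m) (x : T) : R :=
  if o is Some j then g (Z j) x else 1%R.

Definition p_Z_assoc {Mz : Type} (g : Mz -> T -> R) (V : R) m (Z : 'I_m -> Mz)
  n (s : assoc n m) (X : n.-tuple T) : R :=
  ((nclut s)`!%:R / V ^+ nclut s * \prod_(i < n) lik_opt g Z (s i) (tnth X i))%R.

Definition mt_lik {Mz : Type} (g : Mz -> T -> R) (pD lam V : R) m
  (Z : 'I_m -> Mz) n (X : n.-tuple T) : R :=
  (\sum_(s : assoc n m | valid_assoc s)
     p_Z_assoc g V Z s X * p_assoc pD lam V s)%R.

Definition bayes_norm (H : nat -> finType) (w : forall n, H n -> R) (f : forall n, H n -> 'I_n -> T -> R) {Mz : Type} (g : Mz -> T -> R) (pD lam V : R) m
  (Z : 'I_m -> Mz) : \bar R :=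
  \sum_(q <oo) mt_int (fun X' : q.-tuple T => (mt_lik g pD lam V Z X')%:E * mt_pred w f X').

Definition mt_post (H : nat -> finType) (w : forall n, H n -> R) (f : forall n, H n -> 'I_n -> T -> R) {Mz : Type} (g : Mz -> T -> R) (pD lam V : R) m
  (Z : 'I_m -> Mz) n (X : n.-tuple T) : \bar R :=
  (mt_lik g pD lam V Z X)%:E * mt_pred w f X *
  ((fine (bayes_norm w f g pD lam V Z))^-1)%:E.

Definition st_norm {Mz : Type} (g : Mz -> T -> R) m (Z : 'I_m -> Mz)
  (h : T -> R) (o : option 'I_m) : \bar R :=
  \int[mu]_x ((lik_opt g Z o x)%:E * st_pred h x).

Definition st_upd {Mz : Type} (g : Mz -> T -> R) m (Z : 'I_m -> Mz)
  (h : T -> R) (o : option 'I_m) (x : T) : \bar R :=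
  (lik_opt g Z o x)%:E * st_pred h x * ((fine (st_norm g Z h o))^-1)%:E.

Definition l_qs H (f : forall n, H n -> 'I_n -> T -> R) {Mz : Type}
  (g : Mz -> T -> R) (V : R) m (Z : 'I_m -> Mz) n (q : H n) (s : assoc n m)
  : \bar R :=
  ((nclut s)`!%:R / V ^+ nclut s)%:E *
  \big[*%E/1%E]_(i < n) st_norm g Z (f n q i) (s i).

Definition weight_norm (H : nat -> finType) (w : forall n, H n -> R) (f : forall n, H n -> 'I_n -> T -> R) {Mz : Type} (g : Mz -> T -> R) (pD lam V : R) m
  (Z : 'I_m -> Mz) : \bar R :=
  \sum_(q <oo) \sum_(r : H q) \sum_(s : assoc q m | valid_assoc s)
     (w q r * p_assoc pD lam V s)%:E * l_qs f g V Z r s.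

Definition weight_upd (H : nat -> finType) (w : forall n, H n -> R) (f : forall n, H n -> 'I_n -> T -> R) {Mz : Type} (g : Mz -> T -> R) (pD lam V : R) m
  (Z : 'I_m -> Mz) n (q : H n) (s : assoc n m) : \bar R :=
  (w n q * p_assoc pD lam V s)%:E * l_qs f g V Z q s *
  ((fine (weight_norm w f g pD lam V Z))^-1)%:E.

End MT.

From HB Require Import structures.
From mathcomp Require Import all_boot all_order all_algebra fingroup perm.
From mathcomp Require Import all_classical all_reals all_analysis.
From mathcomp Require Import measurable_realfun ring.
Import Order.TTheory GRing.Theory Num.Theory.
Local Open Scope ring_scope.
Local Open Scope ereal_scope.

(* All MT quantities are symmetrisations of products of single-target
   functions.  By Tonelli, the iterated integral of a nonnegative finite sum of
   products is the sum of the products of the one-dimensional integrals, and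
   the n! relabellings of the integration variables cancel the factor 1/n!.
   This gives the prediction formula.  For the update, the relabelling
   sigma |-> sigma o nu is a bijection of valid data associations that
   preserves p(sigma | n) and the clutter count, so p(Z|X,n) p^-(X,n) is a sum
   over (q, sigma, nu) of products of per-target factors
   p(z_{sigma_i} | x) p^{q,i-}(x); integrating it shows that the Bayes
   normaliser equals the normaliser of the updated weights, and dividing each
   factor by its integral yields the updated single-target pdfs. *)

Lemma big_ord_perm {S : Type} {idx : S} {op : Monoid.com_law idx} {n}
  (s : 'S_n) (F : 'I_n -> S) :
  \big[op/idx]_(i < n) F (s i) = \big[op/idx]_(i < n) F i.
Proof. by rewrite [RHS](reindex_inj (@perm_inj _ s)). Qed.

Lemma fact_neq0 (R : numDomainType) n : ((n`!)%:R : R) != 0%R.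
Proof. by rewrite pnatr_eq0 -lt0n fact_gt0. Qed.

Lemma invfact_sum_perm (R : realType) n (S : \bar R) :
  ((n`!)%:R^-1)%:E * \sum_(nu : 'S_n) S = S.
Proof.
rewrite sumr_const card_Sn.
have -> : (S *+ n`!)%R = S *+ n`! by [].
by rewrite -mule_natl muleA -EFinM mulVf ?fact_neq0 // mul1e.
Qed.

Lemma mule_fineV (R : realType) (x : \bar R) :
  x \is a fin_num -> x != 0 -> x * ((fine x)^-1)%:E = 1.
Proof. by move=> xf x0; rewrite -{1}(fineK xf) -EFinM mulfV // fine_eq0. Qed.

Section IteratedIntegral.
Context {d : measure_display} {T : measurableType d} {R : realType}.
Variable mu : {measure set T -> \bar R}.

Lemma iterint_sum_prod n (K : finType) (c : K -> \bar R)
    (h : K -> 'I_n -> T -> \bar R) :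
  (forall k, 0 <= c k) -> (forall k i x, 0 <= h k i x) ->
  (forall k i, measurable_fun [set: T] (h k i : T -> \bar R)) ->
  iterint mu (fun X : n.-tuple T =>
    \sum_(k : K) c k * \prod_(i < n) h k i (tnth X i))
  = \sum_(k : K) c k * \prod_(i < n) \int[mu]_x h k i x.
Proof.
elim: n K c h => [|n IH] K c h c0 h0 hm /=.
  by apply: eq_bigr => k _; rewrite !big_ord0.
have int_ge0 k i : 0 <= \int[mu]_y h k i y.
  by apply: integral_ge0 => y _; exact: h0.
have peel x : (fun t : n.-tuple T =>
    \sum_k c k * \prod_(i < n.+1) h k i (tnth (cons_tuple x t) i)) =
  fun t => \sum_k (c k * h k ord0 x) * \prod_(i < n) h k (lift ord0 i) (tnth t i).
  apply: funext => t; apply: eq_bigr => k _; rewrite big_ord_recl muleA.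
  by under eq_bigr => i _ do rewrite tnthS.
under eq_integral => x _.
  rewrite peel (IH K (fun k => c k * h k ord0 x) (fun k i => h k (lift ord0 i))) //.
  - over.
  - by move=> k; apply: mule_ge0.
set F := fun k x => c k * h k ord0 x * \prod_(i < n) \int[mu]_y h k (lift ord0 i) y.
have mF k : measurable_fun [set: T] (F k) by do 2 apply: emeasurable_funM => //.
have F0 k x : (setT : set T) x -> 0 <= F k x.
  by move=> _; apply: mule_ge0; [exact: mule_ge0 | exact: prode_ge0].
rewrite (ge0_integral_sum mu measurableT mF F0) /F; apply: eq_bigr => k _.
under eq_integral => x _ do rewrite muleAC.
rewrite ge0_integralZl //; last by apply: mule_ge0 => //; exact: prode_ge0.
by rewrite big_ord_recl muleAC muleA.
Qed.

Lemma iterint_sum_prod_perm n (K : finType) (P : pred K) (c : K -> \bar R)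
    (h : K -> 'I_n -> T -> \bar R) (nu : K -> 'S_n) :
  (forall k, 0 <= c k) -> (forall k i x, 0 <= h k i x) ->
  (forall k i, measurable_fun [set: T] (h k i : T -> \bar R)) ->
  iterint mu (fun X : n.-tuple T =>
    \sum_(k | P k) c k * \prod_(i < n) h k i (tnth X (nu k i)))
  = \sum_(k | P k) c k * \prod_(i < n) \int[mu]_x h k i x.
Proof.
move=> c0 h0 hm.
have -> : (fun X : n.-tuple T =>
    \sum_(k | P k) c k * \prod_(i < n) h k i (tnth X (nu k i))) =
  fun X => \sum_k (if P k then c k else 0) *
    \prod_(i < n) h k ((nu k)^-1%g i) (tnth X i).
  apply: funext => X; rewrite big_mkcond; apply: eq_bigr => k _.
  case: (P k); last by rewrite mul0e.
  rewrite -[in RHS](big_ord_perm (nu k)).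
  by under [in RHS]eq_bigr => i _ do rewrite permK.
rewrite (@iterint_sum_prod n K (fun k => if P k then c k else 0)
  (fun k i => h k ((nu k)^-1%g i))); first last.
- by move=> k i; exact: hm.
- by move=> k i x; exact: h0.
- by move=> k; case: (P k).
rewrite [RHS]big_mkcond; apply: eq_bigr => k _.
case: (P k); last by rewrite mul0e.
by rewrite (big_ord_perm (nu k)^-1%g (fun i => \int[mu]_x h k i x)).
Qed.

Lemma iterint_sum3_prod_perm n (A B C : finType)
    (PA : pred A) (PB : pred B) (PC : pred C) (c : A -> B -> C -> \bar R)
    (h : A -> B -> C -> 'I_n -> T -> \bar R) (nu : A -> B -> C -> 'S_n) :
  (forall a b e, 0 <= c a b e) -> (forall a b e i x, 0 <= h a b e i x) ->
  (forall a b e i, measurable_fun [set: T] (h a b e i : T -> \bar R)) ->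
  iterint mu (fun X : n.-tuple T =>
    \sum_(a | PA a) \sum_(b | PB b) \sum_(e | PC e)
      c a b e * \prod_(i < n) h a b e i (tnth X (nu a b e i)))
  = \sum_(a | PA a) \sum_(b | PB b) \sum_(e | PC e)
      c a b e * \prod_(i < n) \int[mu]_x h a b e i x.
Proof.
move=> c0 h0 hm.
under eq_fun => X do rewrite pair_big pair_big.
rewrite (@iterint_sum_prod_perm n _ _ (fun k => c k.1.1 k.1.2 k.2)
  (fun k => h k.1.1 k.1.2 k.2) (fun k => nu k.1.1 k.1.2 k.2)) //.
by rewrite pair_big pair_big.
Qed.

End IteratedIntegral.

Definition assoc_perm n m (nu : 'S_n) (s : assoc n m) : assoc n m :=
  [ffun i => s (nu i)].
Arguments assoc_perm {n m}.

Lemma assoc_perm_inj n m (nu : 'S_n) : injective (@assoc_perm n m nu).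
Proof.
move=> s t /ffunP E; apply/ffunP => i; have := E (nu^-1%g i).
by rewrite !ffunE permKV.
Qed.

Lemma valid_assoc_perm n m (nu : 'S_n) (s : assoc n m) :
  valid_assoc (assoc_perm nu s) = valid_assoc s.
Proof.
apply/idP/idP => /forallP V1; apply/forallP => i; apply/forallP => j;
  apply/implyP => /andP[ne eq].
- have := forallP (V1 (nu^-1%g i)) (nu^-1%g j); rewrite !ffunE !permKV ne eq /=.
  by rewrite (inj_eq (@perm_inj _ _)).
- have := forallP (V1 (nu i)) (nu j); rewrite -!(ffunE (fun i => s (nu i))).
  by rewrite ne eq /= (inj_eq (@perm_inj _ _)).
Qed.

Lemma ndet_assoc_perm n m (nu : 'S_n) (s : assoc n m) :
  ndet (assoc_perm nu s) = ndet s.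
Proof.
rewrite /ndet -[RHS](card_preimset _ (@perm_inj _ nu)); apply: eq_card => i.
by rewrite !inE ffunE.
Qed.

Lemma p_assoc_ge0 (R : realType) (pD lam V : R) n m (s : assoc n m) :
  (0 <= pD <= 1)%R -> (0 <= lam)%R -> (0 < V)%R -> (0 <= p_assoc pD lam V s)%R.
Proof.
move=> /andP[p0 p1] l0 V0; rewrite /p_assoc.
apply: divr_ge0; last exact: ler0n.
apply: mulr_ge0; last by apply: exprn_ge0; apply: mulr_ge0 => //; exact: ltW.
apply: mulr_ge0; last exact: ltW (expR_gt0 _).
by apply: mulr_ge0; apply: exprn_ge0 => //; rewrite subr_ge0.
Qed.

Lemma clutter_factor_ge0 (R : realType) (V : R) k :
  (0 < V)%R -> (0 <= (k`!)%:R / V ^+ k)%R.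
Proof. by move=> V0; rewrite divr_ge0 // exprn_ge0 // ltW. Qed.

Section Likelihood.
Context {d : measure_display} {T : measurableType d} {R : realType}.
Context {Mz : Type} (g : Mz -> T -> R) (m : nat) (Z : 'I_m -> Mz).

Lemma lik_opt_ge0 o x : (forall z x, 0 <= g z x)%R -> (0 <= lik_opt g Z o x)%R.
Proof. by move=> g0; case: o => [j|] //=. Qed.

Lemma measurable_lik_opt o : (forall z, measurable_fun [set: T] (g z)) ->
  measurable_fun [set: T] (lik_opt g Z o).
Proof. by move=> gm; case: o => [j|] /=; [exact: gm | exact: measurable_cst]. Qed.

End Likelihood.

Section Mixture.
Context {d : measure_display} {T : measurableType d} {R : realType}.
Context {mu : {measure set T -> \bar R}} {trans : T -> T -> R}.
Hypothesis trans_ge0 : forall x x', (0 <= trans x x')%R.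
Hypothesis trans_meas :
  measurable_fun [set: T * T] (fun xx : T * T => trans xx.1 xx.2).

Lemma st_pred_ge0 (h : T -> R) x :
  (forall x, 0 <= h x)%R -> 0 <= st_pred mu trans h x.
Proof. by move=> h0; apply: integral_ge0 => y _; rewrite lee_fin mulr_ge0. Qed.

Context {H : nat -> finType} {w : forall n, H n -> R}.
Context {f : forall n, H n -> 'I_n -> T -> R}.
Hypothesis w_ge0 : forall n q, (0 <= w n q)%R.
Hypothesis f_ge0 : forall n q i x, (0 <= f n q i x)%R.
Hypothesis f_meas : forall n q i, measurable_fun [set: T] (f n q i).

Lemma mt_trans_mul_mix n (X X' : n.-tuple T) :
  (mt_trans trans X X' * mt_mix w f X')%:E =
  \sum_(q : H n) \sum_(nu : 'S_n) \sum_(nu' : 'S_n) (w n q)%:E *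
    \prod_(i < n) (trans (tnth X (nu (nu' i))) (tnth X' (nu' i)) *
                   f n q i (tnth X' (nu' i)))%:E.
Proof.
transitivity ((\sum_(q : H n) \sum_(nu : 'S_n) \sum_(nu' : 'S_n) (w n q *
    \prod_(i < n) (trans (tnth X (nu (nu' i))) (tnth X' (nu' i)) *
                   f n q i (tnth X' (nu' i))))%R)%:E); last first.
  rewrite -sumEFin; apply: eq_bigr => q _; rewrite -sumEFin.
  apply: eq_bigr => nu _; rewrite -sumEFin; apply: eq_bigr => nu' _.
  by rewrite EFinM prodEFin.
congr EFin; rewrite /mt_trans /mt_mix mulr_sumr; apply: eq_bigr => q _.
rewrite mulrCA mulr_suml mulr_sumr; apply: eq_bigr => nu _.
rewrite mulr_sumr mulr_sumr; apply: eq_bigr => nu' _; congr (_ * _)%R.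
rewrite big_split /=; congr (_ * _)%R.
by rewrite (big_ord_perm nu' (fun j => trans (tnth X (nu j)) (tnth X' j))).
Qed.

Lemma mt_pred_mix n (X : n.-tuple T) :
  mt_pred mu trans w f X =
  \sum_(q : H n) (w n q)%:E *
    \sum_(nu : 'S_n) \big[*%E/1%E]_(i < n)
       st_pred mu trans (f n q i) (tnth X (nu i)).
Proof.
have int_ge0 q i x : 0 <= \int[mu]_y (trans x y * f n q i y)%:E.
  by apply: integral_ge0 => y _; rewrite lee_fin mulr_ge0.
rewrite /mt_pred /mt_int.
under eq_fun => X' do rewrite mt_trans_mul_mix.
rewrite (@iterint_sum3_prod_perm _ _ _ mu n (H n) {perm 'I_n} {perm 'I_n}
  xpredT xpredT xpredT (fun q _ _ => (w n q)%:E)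
  (fun q nu nu' i y => (trans (tnth X (nu (nu' i))) y * f n q i y)%:E)
  (fun _ _ nu' => nu')); first last.
- move=> q nu nu' i; apply/measurable_EFinP; apply: measurable_funM => //.
  exact: (measurableT_comp trans_meas (pair1_measurable _)).
- by move=> *; rewrite lee_fin mulr_ge0.
- by move=> *; rewrite lee_fin.
rewrite ge0_sume_distrr; last first.
  move=> q _; apply: sume_ge0 => nu _; apply: sume_ge0 => nu' _.
  apply: mule_ge0; first by rewrite lee_fin.
  by apply: prode_ge0 => i _; exact: int_ge0.
apply: eq_bigr => q _; rewrite exchange_big /=.
set S := \sum_(nu : 'S_n) (w n q)%:E *
  \prod_(i < n) \int[mu]_y (trans (tnth X (nu i)) y * f n q i y)%:E.
have relabel (nu' : 'S_n) : \sum_(nu : 'S_n) (w n q)%:E *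
    \prod_(i < n) \int[mu]_y (trans (tnth X (nu (nu' i))) y * f n q i y)%:E = S.
  rewrite /S [RHS](reindex_inj (mulgI nu')); apply: eq_bigr => nu _.
  by congr (_ * _); apply: eq_bigr => i _; rewrite permM.
under eq_bigr => nu' _ do rewrite relabel.
rewrite invfact_sum_perm /S ge0_sume_distrr //.
by move=> nu _; apply: prode_ge0 => i _; exact: int_ge0.
Qed.

Lemma mt_lik_mul_pred {Mz : Type} (g : Mz -> T -> R) (pD lam V : R) (m : nat)
    (Z : 'I_m -> Mz) n (X : n.-tuple T) :
  (0 <= pD <= 1)%R -> (0 <= lam)%R -> (0 < V)%R -> (forall z x, 0 <= g z x)%R ->
  (mt_lik g pD lam V Z X)%:E * mt_pred mu trans w f X =
  \sum_(q : H n) \sum_(s : assoc n m | valid_assoc s) \sum_(nu : 'S_n)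
    (w n q * p_assoc pD lam V s * ((nclut s)`!%:R / V ^+ nclut s))%:E *
    \prod_(i < n) ((lik_opt g Z (s i) (tnth X (nu i)))%:E *
                   st_pred mu trans (f n q i) (tnth X (nu i))).
Proof.
move=> pD01 l0 V0 g0.
have pred_ge0 q i x : 0 <= st_pred mu trans (f n q i) x by exact: st_pred_ge0.
rewrite mt_pred_mix /mt_lik -sumEFin ge0_sume_distrl; last first.
  move=> s _; rewrite lee_fin mulr_ge0 ?p_assoc_ge0 // mulr_ge0 ?clutter_factor_ge0 //.
  by apply: prodr_ge0 => i _; exact: lik_opt_ge0.
transitivity (\sum_(s : assoc n m | valid_assoc s) \sum_(q : H n) \sum_(nu : 'S_n)
   (w n q * p_assoc pD lam V (assoc_perm nu s) *
      ((nclut (assoc_perm nu s))`!%:R / V ^+ nclut (assoc_perm nu s)))%:E *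
   \prod_(i < n) ((lik_opt g Z (assoc_perm nu s i) (tnth X (nu i)))%:E *
                  st_pred mu trans (f n q i) (tnth X (nu i)))).
  apply: eq_bigr => s _.
  rewrite ge0_sume_distrr; last first.
    move=> q _; apply: mule_ge0; first by rewrite lee_fin.
    by apply: sume_ge0 => nu _; apply: prode_ge0.
  apply: eq_bigr => q _; rewrite muleA ge0_sume_distrr; last first.
    by move=> nu _; apply: prode_ge0.
  apply: eq_bigr => nu _.
  rewrite /p_assoc /nclut !ndet_assoc_perm.
  under [in RHS]eq_bigr => i _ do rewrite ffunE.
  rewrite big_split /= prodEFin -EFinM muleA; congr (_ * _); congr EFin.
  rewrite /p_Z_assoc (big_ord_perm nu (fun i => lik_opt g Z (s i) (tnth X i))) /=.
  ring.
rewrite exchange_big /=; apply: eq_bigr => q _.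
rewrite exchange_big [RHS]exchange_big /=; apply: eq_bigr => nu _.
rewrite [RHS](reindex_inj (@assoc_perm_inj n m nu)) /=.
by apply: eq_bigl => s; rewrite valid_assoc_perm.
Qed.

End Mixture.

Section SigmaFinite.
Context {d : measure_display} {T : measurableType d} {R : realType}.
Context {mu : {sigma_finite_measure set T -> \bar R}} {trans : T -> T -> R}.
Hypothesis trans_ge0 : forall x x', (0 <= trans x x')%R.
Hypothesis trans_meas :
  measurable_fun [set: T * T] (fun xx : T * T => trans xx.1 xx.2).

Section SingleTarget.
Variable h : T -> R.
Hypothesis h_ge0 : forall x, (0 <= h x)%R.
Hypothesis h_meas : measurable_fun [set: T] h.

Let F := fun xx : T * T => (trans xx.1 xx.2 * h xx.2)%:E.

Let F_meas : measurable_fun [set: T * T] F.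
Proof.
apply/measurable_EFinP; apply: measurable_funM => //.
exact: (measurableT_comp h_meas measurable_snd).
Qed.

Let F_ge0 xx : 0 <= F xx.
Proof. by rewrite lee_fin mulr_ge0. Qed.

Lemma measurable_st_pred : measurable_fun [set: T] (st_pred mu trans h).
Proof. exact: (measurable_fun_fubini_tonelli_F (m2 := mu) F F_meas F_ge0). Qed.

Lemma integral_st_pred :
  (forall x', \int[mu]_x (trans x x')%:E = 1) -> \int[mu]_x (h x)%:E = 1 ->
  \int[mu]_x st_pred mu trans h x = 1.
Proof.
move=> trans1 h1.
rewrite /st_pred (fubini_tonelli (m1 := mu) (m2 := mu) F F_meas F_ge0) /= -h1.
apply: eq_integral => y _; rewrite /F /=.
under eq_integral => x _ do rewrite EFinM muleC.
rewrite ge0_integralZl ?lee_fin //; first by rewrite trans1 mule1.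
- apply/measurable_EFinP; exact: (measurableT_comp trans_meas (pair2_measurable y)).
- by move=> x _; rewrite lee_fin.
Qed.

End SingleTarget.

Context {H : nat -> finType} {w : forall n, H n -> R}.
Context {f : forall n, H n -> 'I_n -> T -> R}.
Hypothesis w_ge0 : forall n q, (0 <= w n q)%R.
Hypothesis f_ge0 : forall n q i x, (0 <= f n q i x)%R.
Hypothesis f_meas : forall n q i, measurable_fun [set: T] (f n q i).
Context {Mz : Type} (g : Mz -> T -> R) (pD lam V : R) (m : nat) (Z : 'I_m -> Mz).
Hypothesis pD01 : (0 <= pD <= 1)%R.
Hypothesis lam_ge0 : (0 <= lam)%R.
Hypothesis V_gt0 : (0 < V)%R.
Hypothesis g_ge0 : forall z x, (0 <= g z x)%R.
Hypothesis g_meas : forall z, measurable_fun [set: T] (g z).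

Lemma bayes_norm_weight_norm :
  bayes_norm mu trans w f g pD lam V Z = weight_norm mu trans w f g pD lam V Z.
Proof.
have pred_ge0 q r i x : 0 <= st_pred mu trans (f q r i) x by exact: st_pred_ge0.
have coef_ge0 q (s : assoc q m) r :
  (0 <= w q r * p_assoc pD lam V s * ((nclut s)`!%:R / V ^+ nclut s))%R.
  by rewrite mulr_ge0 ?clutter_factor_ge0 // mulr_ge0 ?p_assoc_ge0.
have factor_ge0 q r (s : assoc q m) i x :
    0 <= (lik_opt g Z (s i) x)%:E * st_pred mu trans (f q r i) x.
  by rewrite mule_ge0 // lee_fin lik_opt_ge0.
rewrite /bayes_norm /weight_norm; apply: eq_eseriesr => q _; rewrite /mt_int.
under eq_fun => X' do rewrite mt_lik_mul_pred //.
rewrite (@iterint_sum3_prod_perm _ _ _ mu q (H q) (assoc q m) {perm 'I_q}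
  xpredT (@valid_assoc q m) xpredT
  (fun r s _ => (w q r * p_assoc pD lam V s * ((nclut s)`!%:R / V ^+ nclut s))%:E)
  (fun r s _ i y => (lik_opt g Z (s i) y)%:E * st_pred mu trans (f q r i) y)
  (fun _ _ nu => nu)); first last.
- move=> r s nu i; apply: emeasurable_funM.
    by apply/measurable_EFinP; exact: measurable_lik_opt.
  exact: measurable_st_pred.
- by move=> r s nu i x; exact: factor_ge0.
- by move=> r s nu; rewrite lee_fin coef_ge0.
have term_ge0 r (s : assoc q m) : 0 <= \sum_(nu : 'S_q)
    (w q r * p_assoc pD lam V s * ((nclut s)`!%:R / V ^+ nclut s))%:E *
    \prod_(i < q) \int[mu]_x ((lik_opt g Z (s i) x)%:E * st_pred mu trans (f q r i) x).
  apply: sume_ge0 => nu _; rewrite mule_ge0 ?lee_fin ?coef_ge0 //.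
  by apply: prode_ge0 => i _; apply: integral_ge0 => x _; exact: factor_ge0.
rewrite ge0_sume_distrr; last by move=> r _; apply: sume_ge0 => s _.
apply: eq_bigr => r _; rewrite ge0_sume_distrr //; apply: eq_bigr => s _.
by rewrite invfact_sum_perm /l_qs EFinM muleA.
Qed.

Hypothesis trans_int1 : forall x', \int[mu]_x (trans x x')%:E = 1.
Hypothesis f_int1 : forall n q i, \int[mu]_x (f n q i x)%:E = 1.
Hypothesis st_norm_Some :
  forall n q i j, 0 < st_norm mu trans g Z (f n q i) (Some j) < +oo.

Lemma st_norm_ge0 (h : T -> R) o :
  (forall x, 0 <= h x)%R -> 0 <= st_norm mu trans g Z h o.
Proof.
by move=> h0; apply: integral_ge0 => x _; rewrite mule_ge0 ?lee_fin ?lik_opt_ge0 ?st_pred_ge0.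
Qed.

Lemma st_norm_mulV n (q : H n) i o :
  st_norm mu trans g Z (f n q i) o *
  ((fine (st_norm mu trans g Z (f n q i) o))^-1)%:E = 1.
Proof.
case: o => [j|].
- have /andP[N0 Noo] := st_norm_Some n q i j.
  by apply: mule_fineV; rewrite ?ge0_fin_numE ?Noo ?(ltW N0) // gt_eqF.
- have -> : st_norm mu trans g Z (f n q i) None = 1.
    rewrite /st_norm /=; under eq_integral => x _ do rewrite mul1e.
    exact: integral_st_pred (f_ge0 n q i) (f_meas n q i) trans_int1 (f_int1 n q i).
  by rewrite fine1 invr1 mule1.
Qed.

Lemma mt_post_mix n (X : n.-tuple T) :
  mt_post mu trans w f g pD lam V Z X =
  \sum_(q : H n) \sum_(s : assoc n m | valid_assoc s)
    weight_upd mu trans w f g pD lam V Z q s *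
    \sum_(nu : 'S_n) \big[*%E/1%E]_(i < n)
       st_upd mu trans g Z (f n q i) (s i) (tnth X (nu i)).
Proof.
rewrite /mt_post mt_lik_mul_pred // /weight_upd -bayes_norm_weight_norm.
set iv := ((fine (bayes_norm mu trans w f g pD lam V Z))^-1)%:E.
have term_ge0 q (s : assoc n m) nu : 0 <=
    (w n q * p_assoc pD lam V s * ((nclut s)`!%:R / V ^+ nclut s))%:E *
    \prod_(i < n) ((lik_opt g Z (s i) (tnth X (nu i)))%:E *
                   st_pred mu trans (f n q i) (tnth X (nu i))).
  apply: mule_ge0.
    by rewrite lee_fin mulr_ge0 ?clutter_factor_ge0 // mulr_ge0 ?p_assoc_ge0.
  by apply: prode_ge0 => i _; rewrite mule_ge0 ?lee_fin ?lik_opt_ge0 ?st_pred_ge0.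
rewrite ge0_sume_distrl; last by move=> q _; do 2 apply: sume_ge0 => ? _ //.
apply: eq_bigr => q _; rewrite ge0_sume_distrl; last by move=> s _; exact: sume_ge0.
apply: eq_bigr => s _; rewrite ge0_sume_distrl // ge0_sume_distrr; last first.
  move=> nu _; apply: prode_ge0 => i _; rewrite /st_upd.
  apply: mule_ge0; last by rewrite lee_fin invr_ge0 fine_ge0 ?st_norm_ge0.
  by rewrite mule_ge0 ?lee_fin ?lik_opt_ge0 ?st_pred_ge0.
apply: eq_bigr => nu _.
rewrite /l_qs /st_upd [in RHS]big_split /= EFinM.
set N := \prod_(i < n) st_norm _ _ _ _ _ _.
set Ni := \prod_(i < n) _%:E.
have NNi : N * Ni = 1 by rewrite -big_split big1 // => i _; exact: st_norm_mulV.
set A := (_ * _)%:E; set K := (_ / _)%:E; set P := \prod_(i < n) _.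
by rewrite [P * Ni]muleC !muleA (muleAC _ iv Ni) -[in RHS](muleA (A * K)) NNi
  mule1 (muleAC (A * K) P iv).
Qed.

End SigmaFinite.

Theorem proposition3 (d : measure_display) (T : measurableType d) (R : realType)
  (mu : {sigma_finite_measure set T -> \bar R})
  (trans : T -> T -> R)
  (H : nat -> finType) (w : forall n, H n -> R)
  (f : forall n, H n -> 'I_n -> T -> R)
  (Mz : Type) (g : Mz -> T -> R) (pD lam V : R) (m : nat) (Z : 'I_m -> Mz) :
  (0 <= pD <= 1)%R -> (0 <= lam)%R -> (0 < V)%R ->
  (forall x x', 0 <= trans x x')%R ->
  measurable_fun [set: T * T] (fun xx : T * T => trans xx.1 xx.2) ->
  (forall x', \int[mu]_x (trans x x')%:E = 1) ->
  (forall n q, 0 <= w n q)%R ->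
  (forall n q i x, 0 <= f n q i x)%R ->
  (forall n q i, measurable_fun [set: T] (f n q i)) ->
  (forall n q i, \int[mu]_x (f n q i x)%:E = 1) ->
  \sum_(n <oo) (\sum_(q : H n) w n q)%R%:E = 1 ->
  (forall z x, 0 <= g z x)%R ->
  (forall z, measurable_fun [set: T] (g z)) ->
  (forall n q i j, 0 < st_norm mu trans g Z (f n q i) (Some j) < +oo) ->
  0 < bayes_norm mu trans w f g pD lam V Z < +oo ->
  (forall n (X : n.-tuple T),
     mt_pred mu trans w f X =
     \sum_(q : H n) (w n q)%:E *
       \sum_(nu : 'S_n) \big[*%E/1%E]_(i < n)
          st_pred mu trans (f n q i) (tnth X (nu i)))
  /\
  (forall n (X : n.-tuple T),
     mt_post mu trans w f g pD lam V Z X =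
     \sum_(q : H n) \sum_(s : assoc n m | valid_assoc s)
       weight_upd mu trans w f g pD lam V Z q s *
       \sum_(nu : 'S_n) \big[*%E/1%E]_(i < n)
          st_upd mu trans g Z (f n q i) (s i) (tnth X (nu i))).
Proof.
move=> pD01 lam_ge0 V_gt0 trans_ge0 trans_meas trans_int1 w_ge0 f_ge0 f_meas
  f_int1 _ g_ge0 g_meas st_norm_Some _.
split; first exact: mt_pred_mix.
exact: mt_post_mix.
Qed.
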